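(* In any quantum resource theory, for every state $\rho_A$ and every channel $\mathcal{M}_{A\to B}$, $$D_{\max}^{\mathfrak{F}}(\mathcal{M}_{A\to B}(\rho_A))\le D_{\max}^{\mathfrak{F}}(\rho_A)+D_{\max}^{\mathfrak{F}}(\mathcal{M}_{A\to B}).$$
   Context: A quantum resource theory specifies sets $\mathfrak{F}(A)$ of free states and $\mathfrak{F}(A\to B)$ of free channels such that applying a free channel to a free state yields a free state. The max-relative entropy of states is $D_{\max}(\rho\Vert\sigma)=\log\min\{\lambda:\rho\le\lambda\sigma\}$ if $\operatorname{supp}\rho\subseteq\operatorname{supp}\sigma$ and $+\infty$ otherwise. For channels, $D_{\max}(\mathcal{M}_{A\to B}\Vert\mathcal{N}_{A\to B})=\sup_{\rho_{RA}}D_{\max}((\mathcal{I}_R\otimes\mathcal{M}_{A\to B})(\rho_{RA})\Vert(\mathcal{I}_R\otimes\mathcal{N}_{A\to B})(\rho_{RA}))$, the supremum over all reference systems $R$ and states $\rho_{RA}$. The resource measures are $D_{\max}^{\mathfrak{F}}(\rho_A)=\inf_{\omega_A\in\mathfrak{F}(A)}D_{\max}(\rho_A\Vert\omega_A)$ and $D_{\max}^{\mathfrak{F}}(\mathcal{M}_{A\to B})=\inf_{\mathcal{N}_{A\to B}\in\mathfrak{F}(A\to B)}D_{\max}(\mathcal{M}_{A\to B}\Vert\mathcal{N}_{A\to B})$. *)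

From HB Require Import structures.
From mathcomp Require Import all_boot all_order all_algebra.
From mathcomp Require Import complex mxtens.
From mathcomp Require Import all_classical all_reals.
From mathcomp Require Import ereal exp.

Set Implicit Arguments.
Unset Strict Implicit.
Unset Printing Implicit Defensive.

Import Order.TTheory GRing.Theory Num.Theory.
Local Open Scope ring_scope.
Local Open Scope classical_set_scope.

Section QRT.
Variable R : realType.
Local Notation C := (R[i]).

Definition rc (x : R) : C := Complex x 0.

Definition adjmx m n (A : 'M[C]_(m, n)) : 'M[C]_(n, m) := (map_mx Num.conj A)^T.

Definition hermitian n (A : 'M[C]_n) : Prop := adjmx A = A.

Definition psd n (A : 'M[C]_n) : Prop :=
  hermitian A /\ forall v : 'cV[C]_n, 0 <= (adjmx v *m A *m v) 0 0.

Definition loewner n (X Y : 'M[C]_n) : Prop := psd (Y - X).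

Definition is_state n (rho : 'M[C]_n) : Prop := psd rho /\ \tr rho = 1.

(* (id_r \otimes M) acting on operators on C^r \otimes C^a *)
Definition ampliate r a b (M : 'M[C]_a -> 'M[C]_b) (X : 'M[C]_(r * a))
  : 'M[C]_(r * b) :=
  \matrix_(p, q)
    (M (\matrix_(s, t) X (mxtens_index ((mxtens_unindex p).1, s))
                         (mxtens_index ((mxtens_unindex q).1, t))))
      (mxtens_unindex p).2 (mxtens_unindex q).2.

Arguments ampliate r {a b} M X.

Definition is_channel a b (M : 'M[C]_a -> 'M[C]_b) : Prop :=
  [/\ linear M,
      (forall r (X : 'M[C]_(r * a)), psd X -> psd (ampliate r M X))
    & forall X, \tr (M X) = \tr X].

Definition log2 (x : R) : R := ln x / ln 2.

(* support of a hermitian operator = its (row = column) space *)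
Definition supp_sub n (rho sigma : 'M[C]_n) : Prop := (rho <= sigma)%MS.

Definition Dmax n (rho sigma : 'M[C]_n) : \bar R :=
  if `[< supp_sub rho sigma >] then
    (log2 (inf [set lam : R | loewner rho (rc lam *: sigma)]))%:E
  else +oo%E.

Definition Dmax_chan a b (M N : 'M[C]_a -> 'M[C]_b) : \bar R :=
  ereal_sup [set x : \bar R | exists (r : nat) (rho : 'M[C]_(r * a)),
               is_state rho /\ x = Dmax (ampliate r M rho) (ampliate r N rho)].

Unset Implicit Arguments.
Record resource_theory := {
  sys : Type;
  sdim : sys -> nat;
  free_state : forall A : sys, set 'M[C]_(sdim A);
  free_channel : forall A B : sys, set ('M[C]_(sdim A) -> 'M[C]_(sdim B));
  free_state_is_state : forall (A : sys) (omega : 'M[C]_(sdim A)), free_state A omega -> is_state omega;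
  free_channel_is_channel :
    forall (A B : sys) (N : 'M[C]_(sdim A) -> 'M[C]_(sdim B)), free_channel A B N -> is_channel N;
  free_closed : forall (A B : sys) (N : 'M[C]_(sdim A) -> 'M[C]_(sdim B))
      (omega : 'M[C]_(sdim A)),
      free_channel A B N -> free_state A omega -> free_state B (N omega) }.
Set Implicit Arguments.

Definition DmaxF_state (T : resource_theory) (A : sys T)
    (rho : 'M[C]_(sdim T A)) : \bar R :=
  ereal_inf [set Dmax rho omega | omega in free_state T A].

Definition DmaxF_chan (T : resource_theory) (A B : sys T)
    (M : 'M[C]_(sdim T A) -> 'M[C]_(sdim T B)) : \bar R :=
  ereal_inf [set Dmax_chan M N | N in free_channel T A B].

End QRT.

Arguments sys {R}.
Arguments sdim {R} r _.
Arguments free_state {R} r A.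
Arguments free_channel {R} r A B.

From Pilot Require Import Defs.
From HB Require Import structures.
From mathcomp Require Import all_boot all_order all_algebra.
From mathcomp Require Import complex mxtens.
From mathcomp Require Import all_classical all_reals.
From mathcomp Require Import ereal exp.
From mathcomp Require Import ring lra.

(** If [rho <= l omega] and [M(omega) <= m N(omega)] in the Loewner order,
  positivity of [M] gives [M(rho) <= l M(omega) <= l m N(omega)], so
  [Dmax(M rho || N omega) <= Dmax(rho || omega) + Dmax(M(omega) || N(omega))],
  and the last term is at most [Dmax(M || N)] (trivial reference system).
  When [N] and [omega] are free, so is [N(omega)]; taking infima gives the
  claim.  The delicate point is that [Dmax] is the logarithm of an infimum,
  which is only meaningful when some [l] exists: support inclusion
  [supp rho <= supp omega] must give [rho <= l omega].  This follows by
  compressing [omega] to its support, where it becomes invertible and hence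
  bounded below by a positive multiple of the identity. *)

Set Implicit Arguments.
Unset Strict Implicit.
Unset Printing Implicit Defensive.

Import Order.TTheory GRing.Theory Num.Theory.
Local Open Scope ring_scope.
Local Open Scope classical_set_scope.

Section QuantumResource.
Variable R : realType.
Local Notation C := (R[i]).

Lemma adjmxE m n (A : 'M[C]_(m, n)) i j : adjmx A i j = Num.conj (A j i).
Proof. by rewrite /adjmx !mxE. Qed.

Lemma adjmxM m n p (A : 'M[C]_(m, n)) (B : 'M[C]_(n, p)) :
  adjmx (A *m B) = adjmx B *m adjmx A.
Proof. by rewrite /adjmx map_mxM trmx_mul. Qed.

Lemma adjmxK m n (A : 'M[C]_(m, n)) : adjmx (adjmx A) = A.
Proof. by apply/matrixP=> i j; rewrite !adjmxE conjCK. Qed.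

Lemma adjmxD m n (A B : 'M[C]_(m, n)) : adjmx (A + B) = adjmx A + adjmx B.
Proof. by apply/matrixP=> i j; rewrite !(adjmxE, mxE) rmorphD. Qed.

Lemma adjmxZ m n a (A : 'M[C]_(m, n)) : adjmx (a *: A) = Num.conj a *: adjmx A.
Proof. by apply/matrixP=> i j; rewrite !(adjmxE, mxE) rmorphM. Qed.

Lemma adjmxB m n (A B : 'M[C]_(m, n)) : adjmx (A - B) = adjmx A - adjmx B.
Proof. by rewrite adjmxD -scaleN1r adjmxZ rmorphN rmorph1 scaleN1r. Qed.

Lemma conj_rc (x : R) : Num.conj (rc x) = rc x.
Proof. by rewrite /rc /=; congr Complex; rewrite oppr0. Qed.

Lemma rcM (x y : R) : rc (x * y) = rc x * rc y.
Proof. by rewrite /rc /=; congr Complex; ring. Qed.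

Lemma rc_ge0 (x : R) : 0 <= x -> 0 <= rc x.
Proof. by move=> x0; rewrite -[0 : C]/(rc 0) /rc lecR. Qed.

Lemma rcRe (z : C) : 0 <= z -> rc (complex.Re z) = z.
Proof. by case: z => a b /ger0_Im /= ->. Qed.

Lemma hermitianB n (X Y : 'M[C]_n) :
  Defs.hermitian X -> Defs.hermitian Y -> Defs.hermitian (X - Y).
Proof. by rewrite /Defs.hermitian adjmxB => -> ->. Qed.

Lemma hermitianZ n (x : R) (X : 'M[C]_n) :
  Defs.hermitian X -> Defs.hermitian (rc x *: X).
Proof. by rewrite /Defs.hermitian adjmxZ conj_rc => ->. Qed.

Lemma hermitian_mulmx n m (B : 'M[C]_(n, m)) (X : 'M[C]_n) :
  Defs.hermitian X -> Defs.hermitian (adjmx B *m X *m B).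
Proof. by rewrite /Defs.hermitian !adjmxM adjmxK mulmxA => ->. Qed.

Definition qform n (X : 'M[C]_n) (v : 'cV[C]_n) : C := (adjmx v *m X *m v) 0 0.

Definition bform n (X : 'M[C]_n) (u v : 'cV[C]_n) : C := (adjmx u *m X *m v) 0 0.

Lemma qformD n (X Y : 'M[C]_n) v : qform (X + Y) v = qform X v + qform Y v.
Proof. by rewrite /qform mulmxDr mulmxDl mxE. Qed.

Lemma qformN n (X : 'M[C]_n) v : qform (- X) v = - qform X v.
Proof. by rewrite /qform mulmxN mulNmx mxE. Qed.

Lemma qformB n (X Y : 'M[C]_n) v : qform (X - Y) v = qform X v - qform Y v.
Proof. by rewrite qformD qformN. Qed.

Lemma qformZ n a (X : 'M[C]_n) v : qform (a *: X) v = a * qform X v.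
Proof. by rewrite /qform -scalemxAr -scalemxAl mxE. Qed.

Lemma qform_mulmx n m (B : 'M[C]_(n, m)) (X : 'M[C]_n) v :
  qform (adjmx B *m X *m B) v = qform X (B *m v).
Proof. by rewrite /qform adjmxM !mulmxA. Qed.

Lemma qformE n (X : 'M[C]_n) v :
  qform X v = \sum_i \sum_j Num.conj (v i 0) * X i j * v j 0.
Proof.
rewrite /qform mxE; under eq_bigr => j _ do rewrite mxE big_distrl /=.
rewrite exchange_big /=; apply: eq_bigr => i _; apply: eq_bigr => j _.
by rewrite adjmxE.
Qed.

Lemma bform_conj n (X : 'M[C]_n) u v :
  Defs.hermitian X -> Num.conj (bform X u v) = bform X v u.
Proof. by move=> hX; rewrite /bform -adjmxE !adjmxM adjmxK hX mulmxA. Qed.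

Lemma qform_expand n (X : 'M[C]_n) u v z :
  qform X (u + z *: v) = qform X u + z * bform X u v
    + Num.conj z * bform X v u + Num.conj z * z * qform X v.
Proof.
rewrite /qform /bform adjmxD adjmxZ !mulmxDl !mulmxDr.
have addE (A B : 'M[C]_1) : (A + B) 0 0 = A 0 0 + B 0 0 by rewrite mxE.
have scaleE c (A : 'M[C]_1) : (c *: A) 0 0 = c * A 0 0 by rewrite mxE.
by rewrite -!scalemxAl -!scalemxAr !scalerA !(addE, scaleE); ring.
Qed.

Lemma qform1E n (v : 'cV[C]_n) : qform 1%:M v = \sum_i `|v i 0| ^+ 2.
Proof.
by rewrite /qform mulmx1 mxE; apply: eq_bigr => i _; rewrite adjmxE normCK mulrC.
Qed.

Lemma qform1_ge0 n (v : 'cV[C]_n) : 0 <= qform 1%:M v.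
Proof. by rewrite qform1E sumr_ge0 // => i _; rewrite exprn_ge0. Qed.

Lemma qform1_eq0 n (v : 'cV[C]_n) : qform 1%:M v = 0 -> v = 0.
Proof.
rewrite qform1E => /psumr_eq0P v0; apply/matrixP => i j; rewrite (ord1 j) mxE.
have /eqP := v0 (fun i _ => exprn_ge0 _ (normr_ge0 (v i 0))) i isT.
by rewrite expf_eq0 /= normr_eq0 => /eqP.
Qed.

Lemma entry_mul_le_qform1 n (v : 'cV[C]_n) i j :
  `|v i 0| * `|v j 0| <= qform 1%:M v.
Proof.
have le_sq k : `|v k 0| ^+ 2 <= qform 1%:M v.
  by rewrite qform1E (bigD1 k) //= lerDl sumr_ge0 // => l _; rewrite exprn_ge0.
suff : `|v i 0| * `|v j 0| *+ 2 <= qform 1%:M v *+ 2 by rewrite lerMn2r.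
apply: le_trans (lerD (le_sq i) (le_sq j)).
by apply: real_leif_mean_square_scaled; apply: normr_real.
Qed.

Lemma qform_bounded n (H : 'M[C]_n) :
  exists2 c : C, 0 <= c & forall v, `|qform H v| <= c * qform 1%:M v.
Proof.
exists (\sum_i \sum_j `|H i j|) => [|v].
  by rewrite sumr_ge0 // => i _; rewrite sumr_ge0.
rewrite qformE mulr_suml; apply: le_trans (ler_norm_sum _ _ _) _.
apply: ler_sum => i _; rewrite mulr_suml; apply: le_trans (ler_norm_sum _ _ _) _.
apply: ler_sum => j _; rewrite !normrM norm_conjC mulrAC mulrC.
by rewrite ler_wpM2l // entry_mul_le_qform1.
Qed.

Lemma psd_hermitian n (X : 'M[C]_n) : psd X -> Defs.hermitian X.
Proof. by case. Qed.

Lemma psd_qform_ge0 n (X : 'M[C]_n) v : psd X -> 0 <= qform X v.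
Proof. by case=> _ /(_ v). Qed.

Lemma psd_mulmx n m (B : 'M[C]_(n, m)) (X : 'M[C]_n) :
  psd X -> psd (adjmx B *m X *m B).
Proof.
case=> hX pX; split=> [|v]; first exact: hermitian_mulmx.
by have := pX (B *m v); rewrite -/(qform _ _) -qform_mulmx.
Qed.

Lemma loewnerP n (X Y : 'M[C]_n) : Defs.hermitian X -> Defs.hermitian Y ->
  (forall v, qform X v <= qform Y v) -> loewner X Y.
Proof.
move=> hX hY XY; split=> [|v]; first exact: hermitianB.
by rewrite -/(qform _ _) qformB subr_ge0.
Qed.

Lemma loewner_qform n (X Y : 'M[C]_n) v : loewner X Y -> qform X v <= qform Y v.
Proof. by case=> _ /(_ v); rewrite -/(qform _ _) qformB subr_ge0. Qed.

Lemma qform_line n (X : 'M[C]_n) u v t : Defs.hermitian X -> Num.conj t = t ->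
  qform X (u + (- (t * Num.conj (bform X u v))) *: v) =
  qform X u - 2 * t * `|bform X u v| ^+ 2
    + t ^+ 2 * `|bform X u v| ^+ 2 * qform X v.
Proof.
move=> hX ht; have bvu : bform X v u = Num.conj (bform X u v) by rewrite bform_conj.
rewrite qform_expand bvu normCK rmorphN rmorphM /= ht conjCK; ring.
Qed.

Lemma psd_cauchy_schwarz n (X : 'M[C]_n) u v : psd X ->
  `|bform X u v| ^+ 2 <= qform X u * qform X v.
Proof.
move=> pX; have line t : 0 <= t -> 0 <= qform X u - 2 * t * `|bform X u v| ^+ 2
    + t ^+ 2 * `|bform X u v| ^+ 2 * qform X v.
  move=> t0; rewrite -qform_line ?psd_qform_ge0 //.
    exact: psd_hermitian.
  exact: conj_Creal (ger0_real t0).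
set a := qform X u in line *; set c := qform X v in line *.
set N := `|bform X u v| ^+ 2 in line *.
have a0 : 0 <= a := psd_qform_ge0 u pX.
have N0 : 0 <= N := exprn_ge0 2 (normr_ge0 _).
have /predU1P[c0|c_gt0] : (c == 0) || (0 < c) by rewrite -le0r psd_qform_ge0.
  (* a nonnegative quadratic in [t] with no square term has slope zero *)
  rewrite c0 mulr0; move: N0; rewrite le0r => /predU1P[-> //|N_gt0].
  have t0 : 0 <= (a + 1) / (2 * N) by rewrite divr_ge0 ?addr_ge0 ?mulr_ge0 // ltW.
  have := line _ t0; rewrite c0 mulr0 addr0.
  have -> : 2 * ((a + 1) / (2 * N)) * N = a + 1 by field; rewrite lt0r_neq0.
  by rewrite opprD addrA subrr sub0r oppr_ge0 => /(lt_le_trans ltr01); rewrite ltxx.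
have c_inv0 : 0 <= c^-1 by rewrite invr_ge0 ltW.
have := line _ c_inv0.
have -> : a - 2 * c^-1 * N + c^-1 ^+ 2 * N * c = a - N / c.
  by field; rewrite lt0r_neq0.
by rewrite subr_ge0 ler_pdivrMr // mulrC.
Qed.

Lemma psd_qform_eq0 n (X : 'M[C]_n) v : psd X -> qform X v = 0 -> X *m v = 0.
Proof.
move=> pX Xv0; apply: qform1_eq0.
have := psd_cauchy_schwarz (X *m v) v pX; rewrite Xv0 mulr0.
have -> : bform X (X *m v) v = qform 1%:M (X *m v) by rewrite /bform /qform mulmx1 mulmxA.
move=> le0; have : `|qform 1%:M (X *m v)| ^+ 2 == 0 by rewrite eq_le le0 exprn_ge0.
by rewrite expf_eq0 /= normr_eq0 => /eqP.
Qed.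

Lemma loewner_submx n (X Y : 'M[C]_n) : psd X -> loewner X Y -> (X <= Y)%MS.
Proof.
move=> pX lXY; rewrite submxE; apply/eqP/matrixP => i j.
pose v : 'cV[C]_n := cokermx Y *m delta_mx j 0.
have Yv : Y *m v = 0 by rewrite /v mulmxA mulmx_coker mul0mx.
have Xv : qform X v = 0.
  apply/eqP; rewrite eq_le psd_qform_ge0 // andbT.
  by apply: le_trans (loewner_qform v lXY) _; rewrite /qform -mulmxA Yv mulmx0 mxE.
by move: (psd_qform_eq0 pX Xv) => /matrixP/(_ i 0); rewrite /v mulmxA -colE !mxE.
Qed.

Lemma psd_unitmx_coercive k (K : 'M[C]_k) : psd K -> K \in unitmx ->
  exists2 t : C, 0 <= t & forall v, qform 1%:M v <= t * qform K v.
Proof.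
move=> pK uK; have [c c0 hc] := qform_bounded (adjmx (invmx K)).
exists c => // v; set s := qform 1%:M v; set w := invmx K *m v.
have Kvw : bform K v w = s.
  by rewrite /bform /w /s mulmxA -(mulmxA _ K) mulmxV // mulmx1.
have Kw : qform K w = qform (adjmx (invmx K)) v.
  by rewrite /qform /w adjmxM -!mulmxA mulKVmx.
have := psd_cauchy_schwarz v w pK; rewrite Kvw Kw.
have s0 : 0 <= s := qform1_ge0 v.
have Kw0 : 0 <= qform (adjmx (invmx K)) v by rewrite -Kw psd_qform_ge0.
have Kv0 : 0 <= qform K v := psd_qform_ge0 v pK.
rewrite ger0_norm // => s2_le.
have {}s2_le : s ^+ 2 <= qform K v * (c * s).
  by apply: le_trans s2_le _; rewrite ler_wpM2l // -[X in X <= _]ger0_norm.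
move: s0; rewrite le0r => /predU1P[->|s_gt0]; first by rewrite mulr_ge0.
by rewrite -(ler_pM2r s_gt0) -expr2 (le_trans s2_le) // mulrCA mulrA.
Qed.

Lemma hermitian_compress n r (W : 'M[C]_(r, n)) (Wr : 'M[C]_(n, r)) (Z : 'M[C]_n) :
  W *m Wr = 1%:M -> Defs.hermitian Z -> (Z <= W)%MS ->
  Z = adjmx W *m (adjmx Wr *m Z *m Wr) *m W.
Proof.
move=> WWr hZ sZW.
have ZWrW : Z *m Wr *m W = Z.
  by rewrite -{1}(mulmxKpV sZW) -(mulmxA _ W Wr) WWr mulmx1 mulmxKpV.
symmetry; rewrite !mulmxA -adjmxM -!mulmxA [Z *m _]mulmxA ZWrW.
by rewrite -{1}hZ -adjmxM mulmxA ZWrW hZ.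
Qed.

Lemma psd_submx_loewner n (X Y : 'M[C]_n) : psd X -> psd Y -> (X <= Y)%MS ->
  exists lam : R, loewner X (rc lam *: Y).
Proof.
move=> pX pY sXY; set W := row_base Y.
have /row_freeP [Wr WWr] := row_base_free Y.
have sYW : (Y <= W)%MS by rewrite eq_row_base.
have eY := hermitian_compress WWr (psd_hermitian pY) sYW.
have eX := hermitian_compress WWr (psd_hermitian pX) (submx_trans sXY sYW).
set K := adjmx Wr *m Y *m Wr in eY.
have uK : K \in unitmx.
  rewrite -row_free_unit /row_free eqn_leq rank_leq_row /=.
  apply: leq_trans (mxrankM_maxr (adjmx W) K).
  by rewrite {1}eY mxrankM_maxl.
have [t t0 ht] := psd_unitmx_coercive (psd_mulmx Wr pY) uK.
have [c c0 hc] := qform_bounded (adjmx Wr *m X *m Wr).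
exists (complex.Re (c * t)).
apply: loewnerP (psd_hermitian pX) (hermitianZ _ (psd_hermitian pY)) _ => v.
rewrite qformZ rcRe ?mulr_ge0 // [in qform Y v]eY {1}eX !(qform_mulmx W).
apply: le_trans (real_ler_norm (ger0_real (psd_qform_ge0 _ (psd_mulmx Wr pX)))) _.
by apply: le_trans (hc _) _; rewrite -mulrA ler_wpM2l.
Qed.

Lemma sum_delta n (i : 'I_n) (F : 'I_n -> C) : \sum_k (k == i)%:R * F k = F i.
Proof.
by rewrite (bigD1 i) //= eqxx mul1r big1 ?addr0 // => k /negbTE ->; rewrite mul0r.
Qed.

Lemma qform_delta n (X : 'M[C]_n) i : qform X (delta_mx i 0) = X i i.
Proof.
rewrite qformE.
under eq_bigr => k _ do under eq_bigr => l _ do rewrite !mxE !eqxx !andbT rmorph_nat.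
rewrite -(sum_delta i (fun k => X k i)); apply: eq_bigr => k _.
rewrite -(sum_delta i (fun l => X k l)) mulr_sumr; apply: eq_bigr => l _.
by case: (l == i); case: (k == i); rewrite /= ?mul0r ?mul1r ?mulr0 ?mulr1.
Qed.

Lemma psd_tr_ge0 n (X : 'M[C]_n) : psd X -> 0 <= \tr X.
Proof. by move=> pX; rewrite sumr_ge0 // => i _; rewrite -qform_delta psd_qform_ge0. Qed.

Lemma loewner_scale_ge1 n (X Y : 'M[C]_n) c :
  is_state X -> is_state Y -> loewner X (rc c *: Y) -> 1 <= c.
Proof.
case=> _ trX [_ trY] /psd_tr_ge0.
rewrite mxtraceD linearN /= mxtraceZ trX trY mulr1 subr_ge0.
by rewrite -[1 : C]/(rc 1) /rc lecR.
Qed.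

Lemma loewner_scale_trans n (X Y Z : 'M[C]_n) (c d : R) :
  0 <= c -> Defs.hermitian X -> Defs.hermitian Z ->
  loewner X (rc c *: Y) -> loewner Y (rc d *: Z) -> loewner X (rc (c * d) *: Z).
Proof.
move=> c0 hX hZ XY YZ; apply: loewnerP hX (hermitianZ _ hZ) _ => v.
apply: le_trans (loewner_qform v XY) _.
by rewrite !qformZ rcM -mulrA ler_wpM2l ?rc_ge0 // -qformZ loewner_qform.
Qed.

Lemma sum_mxtens_unindex1 a (F : 'I_a -> C) :
  \sum_(p < 1 * a) F (mxtens_unindex p).2 = \sum_j F j.
Proof.
rewrite (reindex (fun j : 'I_a => mxtens_index (ord0 : 'I_1, j))).
  by apply: eq_bigr => j _; rewrite mxtens_indexK.
exists (fun p => (mxtens_unindex p).2) => p _; first by rewrite mxtens_indexK.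
apply: (can_inj (@mxtens_unindexK 1 a)); rewrite mxtens_indexK.
by case: (mxtens_unindex p) => i j /=; rewrite (ord1 i).
Qed.

(* [lift1 X] is [X] viewed on [C^1 (x) C^a], the trivial reference system. *)
Definition embed1 a : 'M[C]_(1 * a, a) :=
  \matrix_(p, j) (j == (mxtens_unindex p).2)%:R.

Definition lift1 a (X : 'M[C]_a) : 'M[C]_(1 * a) :=
  embed1 a *m X *m adjmx (embed1 a).

Lemma lift1E a (X : 'M[C]_a) p q :
  lift1 X p q = X (mxtens_unindex p).2 (mxtens_unindex q).2.
Proof.
rewrite /lift1 mxE; under eq_bigr => l _ do rewrite mxE adjmxE mxE rmorph_nat.
rewrite -(sum_delta (mxtens_unindex q).2); apply: eq_bigr => l _.
rewrite mulrC; congr (_ * _).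
by under eq_bigr => k _ do rewrite mxE; rewrite sum_delta.
Qed.

Lemma embed1_isometry a : adjmx (embed1 a) *m embed1 a = 1%:M.
Proof.
apply/matrixP => i j; rewrite !mxE.
under eq_bigr => p _ do rewrite adjmxE !mxE rmorph_nat.
rewrite (sum_mxtens_unindex1 (fun k => (i == k)%:R * (j == k)%:R)).
under eq_bigr => k _ do rewrite [i == k]eq_sym.
by rewrite sum_delta eq_sym.
Qed.

Lemma lift1K a (X : 'M[C]_a) : adjmx (embed1 a) *m lift1 X *m embed1 a = X.
Proof.
by rewrite /lift1 !mulmxA embed1_isometry mul1mx -mulmxA embed1_isometry mulmx1.
Qed.

Lemma lift1B a (X Y : 'M[C]_a) : lift1 (X - Y) = lift1 X - lift1 Y.
Proof. by rewrite /lift1 mulmxBr mulmxBl. Qed.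

Lemma lift1Z a c (X : 'M[C]_a) : lift1 (c *: X) = c *: lift1 X.
Proof. by rewrite /lift1 -scalemxAr -scalemxAl. Qed.

Lemma psd_lift1 a (X : 'M[C]_a) : psd (lift1 X) <-> psd X.
Proof.
split=> pX; first by rewrite -(lift1K X); exact: psd_mulmx.
by rewrite /lift1 -{1}(adjmxK (embed1 a)); exact: psd_mulmx.
Qed.

Lemma loewner_lift1 a (X Y : 'M[C]_a) : loewner (lift1 X) (lift1 Y) <-> loewner X Y.
Proof. by rewrite /loewner -lift1B; exact: psd_lift1. Qed.

Lemma submx_lift1 a (X Y : 'M[C]_a) : (lift1 X <= lift1 Y)%MS = (X <= Y)%MS.
Proof.
apply/submxP/submxP => -[D eD].
  exists (adjmx (embed1 a) *m D *m embed1 a).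
  by rewrite -(lift1K X) eD /lift1 !mulmxA -mulmxA embed1_isometry mulmx1.
exists (embed1 a *m D *m adjmx (embed1 a)).
rewrite /lift1 eD !mulmxA.
by rewrite -[embed1 a *m D *m _ *m embed1 a]mulmxA embed1_isometry mulmx1.
Qed.

Lemma tr_lift1 a (X : 'M[C]_a) : \tr (lift1 X) = \tr X.
Proof.
rewrite /mxtrace; under eq_bigr => p _ do rewrite lift1E.
exact: (sum_mxtens_unindex1 (fun k => X k k)).
Qed.

Lemma state_lift1 a (X : 'M[C]_a) : is_state X -> is_state (lift1 X).
Proof. by case=> pX trX; split; [apply/psd_lift1 | rewrite tr_lift1]. Qed.

Lemma ampliate_lift1 a b (M : 'M[C]_a -> 'M[C]_b) (X : 'M[C]_a) :
  @ampliate R 1 a b M (lift1 X) = lift1 (M X).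
Proof.
apply/matrixP => p q; rewrite lift1E mxE.
by congr (M _ _ _); apply/matrixP => s t; rewrite mxE lift1E !mxtens_indexK.
Qed.

Lemma linearZB a b (M : 'M[C]_a -> 'M[C]_b) c X Y :
  linear M -> M (c *: X - Y) = c *: M X - M Y.
Proof.
move=> linM.
have M0 : M 0 = 0.
  have := linM 1 0 0; rewrite !scale1r addr0 => M00.
  by apply: (@addrI _ (M 0)); rewrite addr0 -M00.
have MN : M (- Y) = - M Y.
  by have := linM (-1) Y 0; rewrite addr0 M0 addr0 !scaleN1r.
by rewrite linM MN.
Qed.

Lemma channel_psd a b (M : 'M[C]_a -> 'M[C]_b) X :
  is_channel M -> psd X -> psd (M X).
Proof.
case=> _ cpM _ pX; apply/(psd_lift1 (M X)); rewrite -ampliate_lift1.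
exact/cpM/psd_lift1.
Qed.

Lemma channel_state a b (M : 'M[C]_a -> 'M[C]_b) X :
  is_channel M -> is_state X -> is_state (M X).
Proof. by move=> chM [pX trX]; split; [exact: channel_psd | case: chM => _ _ ->]. Qed.

Lemma channel_loewner a b (M : 'M[C]_a -> 'M[C]_b) X Y c : is_channel M ->
  loewner X (rc c *: Y) -> loewner (M X) (rc c *: M Y).
Proof.
move=> chM XY; have := channel_psd chM XY.
by case: (chM) => linM _ _; rewrite /loewner linearZB.
Qed.

Definition loewner_scalars n (X Y : 'M[C]_n) : set R :=
  [set lam | loewner X (rc lam *: Y)].

Lemma DmaxE n (X Y : 'M[C]_n) :
  supp_sub X Y -> Dmax X Y = (log2 (inf (loewner_scalars X Y)))%:E.
Proof. by rewrite /Dmax => sXY; case: asboolP. Qed.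

Lemma Dmax_pinfty n (X Y : 'M[C]_n) : ~ supp_sub X Y -> Dmax X Y = +oo%E.
Proof. by rewrite /Dmax => nsXY; case: asboolP. Qed.

Lemma inf_loewner_scalars_ge1 n (X Y : 'M[C]_n) :
  is_state X -> is_state Y -> loewner_scalars X Y !=set0 ->
  1 <= inf (loewner_scalars X Y).
Proof. by move=> sX sY ne; apply: lb_le_inf ne _ => lam; apply: loewner_scale_ge1. Qed.

Lemma log2_ge0 (x : R) : 1 <= x -> 0 <= log2 x.
Proof. by move=> x1; rewrite /log2 divr_ge0 ?ln_ge0 //; lra. Qed.

Lemma ler_log2 (x y : R) : 0 < x -> x <= y -> log2 x <= log2 y.
Proof.
move=> x0 xy; rewrite /log2 ler_pM2r ?invr_gt0 ?ln_gt0 //; last by lra.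
by rewrite ler_ln // posrE (lt_le_trans x0 xy).
Qed.

Lemma log2M (x y : R) : 0 < x -> 0 < y -> log2 (x * y) = log2 x + log2 y.
Proof. by move=> x0 y0; rewrite /log2 lnM ?posrE // mulrDl. Qed.

Lemma Dmax_ge0 n (X Y : 'M[C]_n) : is_state X -> is_state Y -> (0 <= Dmax X Y)%E.
Proof.
move=> sX sY; have [sXY|nsXY] := asboolP (supp_sub X Y); last first.
  by rewrite Dmax_pinfty // leey.
rewrite DmaxE // lee_fin; have [->|ne] := eqVneq (loewner_scalars X Y) set0.
  (* junk values: [inf set0 = 0] and [ln 0 = 0] *)
  by rewrite inf0 /log2 ln0 // mul0r.
by apply/log2_ge0/inf_loewner_scalars_ge1 => //; apply/set0P.
Qed.

Lemma loewner_scalars_lift1 a (X Y : 'M[C]_a) :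
  loewner_scalars (lift1 X) (lift1 Y) = loewner_scalars X Y.
Proof.
by apply/seteqP; split => lam; rewrite /loewner_scalars /= -lift1Z => /loewner_lift1.
Qed.

Lemma Dmax_lift1 a (X Y : 'M[C]_a) : Dmax (lift1 X) (lift1 Y) = Dmax X Y.
Proof.
have [sXY|nsXY] := asboolP (supp_sub X Y).
  by rewrite !DmaxE ?loewner_scalars_lift1 // /supp_sub submx_lift1.
by rewrite !Dmax_pinfty // /supp_sub submx_lift1.
Qed.

Lemma Dmax_le_Dmax_chan a b (M N : 'M[C]_a -> 'M[C]_b) X :
  is_state X -> (Dmax (M X) (N X) <= Dmax_chan M N)%E.
Proof.
move=> sX; rewrite -Dmax_lift1 -(ampliate_lift1 M) -(ampliate_lift1 N).
by apply: ereal_sup_ubound; exists 1%N, (lift1 X); split; first exact: state_lift1.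
Qed.

Lemma inf_mul_le (A B D : set R) : A !=set0 -> B !=set0 ->
  lbound A 1 -> lbound B 1 -> has_lbound D ->
  (forall x y, A x -> B y -> D (x * y)) -> inf D <= inf A * inf B.
Proof.
move=> neA [y0 By0] A1 B1 lbD ABD.
have pos (x : R) : 1 <= x -> 0 < x := lt_le_trans ltr01.
have infA_gt0 : 0 < inf A := pos _ (lb_le_inf neA A1).
have le_infA y : B y -> inf D / y <= inf A.
  move=> By; apply: lb_le_inf neA _ => x Ax.
  by rewrite ler_pdivrMr ?pos ?B1 //; apply: ge_inf => //; exact: ABD.
have : inf D / inf A <= inf B.
  apply: lb_le_inf; first by exists y0.
  by move=> y By; rewrite ler_pdivrMr // mulrC -ler_pdivrMr ?pos ?B1 // le_infA.
by rewrite ler_pdivrMr // mulrC.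
Qed.

Lemma Dmax_chain a b (X Y : 'M[C]_a) (M N : 'M[C]_a -> 'M[C]_b) :
  is_state X -> is_state Y -> is_channel M -> is_channel N ->
  (Dmax (M X) (N Y) <= Dmax X Y + Dmax (M Y) (N Y))%E.
Proof.
move=> sX sY chM chN.
have sMX := channel_state chM sX; have sMY := channel_state chM sY.
have sNY := channel_state chN sY.
have DXY0 := Dmax_ge0 sX sY; have DMNY0 := Dmax_ge0 sMY sNY.
have [sXY|nsXY] := asboolP (supp_sub X Y); last first.
  by rewrite (Dmax_pinfty nsXY) addye ?leey //; apply: contraTneq DMNY0 => ->.
have [sMNY|nsMNY] := asboolP (supp_sub (M Y) (N Y)); last first.
  by rewrite (Dmax_pinfty nsMNY) addey ?leey //; apply: contraTneq DXY0 => ->.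
have [l Sl] := psd_submx_loewner (proj1 sX) (proj1 sY) sXY.
have [m Sm] := psd_submx_loewner (proj1 sMY) (proj1 sNY) sMNY.
have scalars_mul l' m' : loewner_scalars X Y l' -> loewner_scalars (M Y) (N Y) m' ->
    loewner_scalars (M X) (N Y) (l' * m').
  move=> Sl' Sm'; apply: loewner_scale_trans (channel_loewner chM Sl') Sm'.
  - exact: le_trans ler01 (loewner_scale_ge1 sX sY Sl').
  - exact/psd_hermitian/(proj1 sMX).
  - exact/psd_hermitian/(proj1 sNY).
have sMXNY : supp_sub (M X) (N Y).
  apply: submx_trans (loewner_submx (proj1 sMX) (scalars_mul _ _ Sl Sm)) _.
  exact: scalemx_sub.
have inf_gt0 n (U V : 'M[C]_n) lam : is_state U -> is_state V ->
    loewner_scalars U V lam -> 0 < inf (loewner_scalars U V).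
  move=> sU sV Slam; apply: lt_le_trans ltr01 (inf_loewner_scalars_ge1 sU sV _).
  by exists lam.
have infXY_gt0 := inf_gt0 _ _ _ _ sX sY Sl.
have infMNY_gt0 := inf_gt0 _ _ _ _ sMY sNY Sm.
rewrite !DmaxE // -EFinD lee_fin -log2M //.
apply: ler_log2; first exact: inf_gt0 (scalars_mul _ _ Sl Sm).
apply: inf_mul_le scalars_mul; [by exists l | by exists m | | | exists 1];
  by move=> lam; apply: loewner_scale_ge1.
Qed.

Lemma lb_ereal_infD (f : \bar R) (SA SB : set (\bar R)) :
  (forall x, SA x -> (0 <= x)%E) -> (forall y, SB y -> (0 <= y)%E) ->
  (forall x y, SA x -> SB y -> (f <= x + y)%E) ->
  (f <= ereal_inf SA + ereal_inf SB)%E.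
Proof.
move=> SA0 SB0 fAB.
have infA0 : (0 <= ereal_inf SA)%E by apply/ereal_infP.
have infB0 : (0 <= ereal_inf SB)%E by apply/ereal_infP.
case eA: (ereal_inf SA) infA0 => [x| |] // _; last first.
  by rewrite addye ?leey //; apply: contraTneq infB0 => ->.
case eB: (ereal_inf SB) infB0 => [y| |] // _; last by rewrite addey // leey.
apply/lee_addgt0Pr => e e0.
have e2 : 0 < e / 2 by rewrite divr_gt0.
have finA : ereal_inf SA \is a fin_num by rewrite eA.
have finB : ereal_inf SB \is a fin_num by rewrite eB.
have [x' Ax' ltx'] := lb_ereal_inf_adherent e2 finA.
have [y' By' lty'] := lb_ereal_inf_adherent e2 finB.
rewrite eA in ltx'; rewrite eB in lty'.
apply: le_trans (fAB _ _ Ax' By') (le_trans (leeD (ltW ltx') (ltW lty')) _).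
by rewrite -!EFinD lee_fin; lra.
Qed.

End QuantumResource.

Theorem proposition1 (R : realType) (T : resource_theory R) (A B : sys T)
  (rho : 'M[R[i]]_(sdim T A)) (M : 'M[R[i]]_(sdim T A) -> 'M[R[i]]_(sdim T B)) :
  is_state rho -> is_channel M ->
  (DmaxF_state (M rho) <= DmaxF_state rho + DmaxF_chan M)%E.
Proof.
move=> srho chM; apply: lb_ereal_infD.
- by move=> _ [om /(free_state_is_state _ _ _ _) som <-]; exact: Dmax_ge0.
- move=> _ [N /(free_channel_is_channel _ _ _ _ _) chN <-].
  apply: le_trans (Dmax_le_Dmax_chan M N srho).
  exact: Dmax_ge0 (channel_state chM srho) (channel_state chN srho).
move=> _ _ [om fom <-] [N fN <-].
have som := free_state_is_state _ _ _ _ fom.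
have chN := free_channel_is_channel _ _ _ _ _ fN.
apply: le_trans (leeD2l _ (Dmax_le_Dmax_chan M N som)).
apply: le_trans (Dmax_chain srho som chM chN).
by apply: ereal_inf_lbound; exists (N om) => //; exact: free_closed _ _ _ _ _ _ fN fom.
Qed.
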